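(* Let $n\ge 2$, let $M$ be an $n$-Metric on a set $X$, and let $\mathcal{T}$ be the topology on $X$ generated by the $M$-open balls $B^M_\epsilon(x)=\{y\in X\mid M(\langle x\rangle^{n-1},y)<\epsilon\}$ ($x\in X$, $\epsilon>0$). Then $(X,\mathcal{T})$ is a metric space, i.e. there is a metric on $X$ whose open balls generate $\mathcal{T}$.
   Context: Notation: $\langle a\rangle^k$ denotes the $k$-tuple $(a,\dots,a)$ inserted into an argument list. An $n$-Metric on $X$ is a function $M:X^n\to\mathbb{R}$ such that for all $x_1,\dots,x_n,a\in X$: (1) $0\le M(\langle x_1\rangle^{n-1},x_2)$; (2) $M(x_1,\dots,x_n)=M(x_{\pi(1)},\dots,x_{\pi(n)})$ for every permutation $\pi$ of $\{1,\dots,n\}$; (3) $M(\langle x_1\rangle^{n-1},x_2)=0$ if and only if $x_1=x_2$; (4) $M(x_1,\dots,x_n)\le M(x_1,\dots,x_{n-1},a)+M(\langle a\rangle^{n-1},x_n)$. The $M$-open balls form a basis of a topology on $X$. *)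

From Stdlib Require Import Reals.
From mathcomp Require Import all_boot all_fingroup.
Set Implicit Arguments. Unset Strict Implicit. Unset Printing Implicit Defensive.

Local Open Scope R_scope.

Definition set_last {X : Type} {n : nat} (f : 'I_n -> X) (a : X) : 'I_n -> X :=
  fun i => if val i == n.-1 then a else f i.

Definition rep_last {X : Type} (n : nat) (x1 x2 : X) : 'I_n -> X :=
  set_last (fun _ => x1) x2.

Definition is_nMetric {X : Type} (n : nat) (M : ('I_n -> X) -> R) : Prop :=
  (forall x1 x2 : X, 0 <= M (@rep_last X n x1 x2)) /\
  (forall (f : 'I_n -> X) (p : {perm 'I_n}), M f = M (fun i => f (p i))) /\
  (forall x1 x2 : X, M (@rep_last X n x1 x2) = 0 <-> x1 = x2) /\
  (forall (f : 'I_n -> X) (a : X) (l : 'I_n), val l = n.-1 ->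
     M f <= M (set_last f a) + M (@rep_last X n a (f l))).

Definition Mball {X : Type} (n : nat) (M : ('I_n -> X) -> R) (x : X) (eps : R)
  : X -> Prop := fun y => M (@rep_last X n x y) < eps.

Definition M_open {X : Type} (n : nat) (M : ('I_n -> X) -> R) (U : X -> Prop) : Prop :=
  forall y, U y -> exists x eps, 0 < eps /\ Mball M x eps y /\
                                 (forall z, Mball M x eps z -> U z).

Definition is_metric {X : Type} (d : X -> X -> R) : Prop :=
  (forall x y, 0 <= d x y) /\
  (forall x y, d x y = 0 <-> x = y) /\
  (forall x y, d x y = d y x) /\
  (forall x y z, d x z <= d x y + d y z).

Definition d_open {X : Type} (d : X -> X -> R) (U : X -> Prop) : Prop :=
  forall y, U y -> exists x r, 0 < r /\ d x y < r /\
                               (forall z, d x z < r -> U z).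

(** The quantity [D x y := M(<x>^{n-1}, y)] satisfies [D x x = 0] and, by axiom (4)
    applied to [(<x>^{n-1}, z)] with [a := y], the triangle inequality
    [D x z <= D x y + D y z].  It need not be symmetric, but it is symmetric up to a
    constant: replacing the arguments of [(<y>^{n-1}, x)] one at a time by [x], each
    replacement costs at most [D x y] by axioms (2) and (4), so
    [D y x <= (n-1) D x y].  Hence [d x y := D x y + D y x] is a metric with
    [D <= d <= n D], and comparable distances have the same centered balls, so the
    open sets coincide. *)

From Stdlib Require Import Reals Lra FunctionalExtensionality.
From mathcomp Require Import all_boot all_fingroup.

Local Open Scope R_scope.

Definition centered_open {X : Type} (D : X -> X -> R) (U : X -> Prop) : Prop :=
  forall y, U y -> exists r, 0 < r /\ forall z, D y z < r -> U z.

Lemma d_open_centered {X : Type} (D : X -> X -> R) (U : X -> Prop) :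
  (forall x, D x x = 0) -> (forall x y z, D x z <= D x y + D y z) ->
  d_open D U <-> centered_open D U.
Proof.
move=> D_refl D_triangle; split=> HU y Uy.
- have [x [r [r_gt0 [Dxy ball_sub]]]] := HU y Uy.
  exists (r - D x y); split; first lra.
  by move=> z Dyz; apply: ball_sub; have := D_triangle x y z; lra.
- have [r [r_gt0 ball_sub]] := HU y Uy.
  by exists y, r; rewrite D_refl.
Qed.

Lemma centered_open_dominated {X : Type} (D1 D2 : X -> X -> R) (c : R)
    (U : X -> Prop) :
  0 < c -> (forall x y, D1 x y <= c * D2 x y) ->
  centered_open D1 U -> centered_open D2 U.
Proof.
move=> c_gt0 D12 HU y Uy; have [r [r_gt0 ball_sub]] := HU y Uy.
exists (r / c); split; first exact: Rdiv_lt_0_compat.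
move=> z D2yz; apply: ball_sub.
have r_eq : c * (r / c) = r by field; lra.
have := D12 y z; nra.
Qed.

Lemma symmetrized_is_metric {X : Type} (D : X -> X -> R) :
  (forall x y, 0 <= D x y) -> (forall x y, D x y = 0 <-> x = y) ->
  (forall x y z, D x z <= D x y + D y z) ->
  is_metric (fun x y => D x y + D y x).
Proof.
move=> D_ge0 D_eq0 D_triangle; split; last split; last split.
- by move=> x y; have := D_ge0 x y; have := D_ge0 y x; lra.
- move=> x y; split=> [Dsum0 | <-]; last by rewrite (proj2 (D_eq0 x x) erefl); lra.
  by apply/D_eq0; have := D_ge0 x y; have := D_ge0 y x; lra.
- by move=> x y; lra.
- by move=> x y z; have := D_triangle x y z; have := D_triangle z y x; lra.
Qed.

Definition Mdist {X : Type} {n : nat} (M : ('I_n -> X) -> R) (x y : X) : R :=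
  M (rep_last (n := n) x y).

Section NMetricDistance.

Context {X : Type} {n : nat} {M : ('I_n -> X) -> R}.
Hypothesis M_nMetric : is_nMetric M.
Hypothesis n_gt0 : (0 < n)%N.

Lemma Mdist_ge0 x y : 0 <= Mdist M x y.
Proof. by case: M_nMetric => M_ge0 _; exact: M_ge0. Qed.

Lemma Mdist_eq0 x y : Mdist M x y = 0 <-> x = y.
Proof. by case: M_nMetric => _ [_ [M_eq0 _]]; exact: M_eq0. Qed.

Lemma Mdist_refl x : Mdist M x x = 0.
Proof. exact/Mdist_eq0. Qed.

Let ord_last : 'I_n := Ordinal (etrans (ltn_predL n) n_gt0).

Lemma set_last_rep_last (x y z : X) : set_last (rep_last (n := n) x y) z = rep_last (n := n) x z.
Proof.
by apply: functional_extensionality => i; rewrite /rep_last /set_last; case: ifP => // ->.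
Qed.

Lemma Mdist_triangle x y z : Mdist M x z <= Mdist M x y + Mdist M y z.
Proof.
case: M_nMetric => _ [_ [_ M_last]].
have := M_last (rep_last (n := n) x z) y ord_last erefl.
by rewrite set_last_rep_last /rep_last /set_last eqxx.
Qed.

(* Moving the [i]-th argument into the last slot by a transposition turns axiom (4)
   into a statement about an arbitrary argument. *)
Lemma nMetric_update_le (f : 'I_n -> X) (i : 'I_n) (a : X) :
  M f <= M [eta f with i |-> a] + Mdist M a (f i).
Proof.
case: M_nMetric => _ [M_perm [_ M_last]].
set p := tperm i ord_last.
rewrite (M_perm f p) (M_perm [eta f with i |-> a] p).
have := M_last (fun j => f (p j)) a ord_last erefl.
have -> : set_last (fun j => f (p j)) a = (fun j => [eta f with i |-> a] (p j)).
  apply: functional_extensionality => j; rewrite /set_last /=.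
  by rewrite -{1}(tpermR i ord_last) (inj_eq perm_inj).
by rewrite /p tpermR.
Qed.

Lemma nMetric_le_mul (x : X) (c : R) (k : nat) (f : 'I_n -> X) :
  (k <= n)%N -> (forall i, Mdist M x (f i) <= c) ->
  (forall i : 'I_n, (k <= i)%N -> f i = x) -> M f <= INR k * c.
Proof.
elim: k f => [|k IH] f le_kn Df f_far.
  have -> : f = rep_last (n := n) x x.
    apply: functional_extensionality => i.
    by rewrite (f_far i) // /rep_last /set_last; case: ifP.
  by change (Mdist M x x <= 0 * c); rewrite Mdist_refl; lra.
set ik : 'I_n := Ordinal le_kn.
have c_ge0 : 0 <= c by have := Mdist_ge0 x (f ik); have := Df ik; lra.
have := nMetric_update_le f ik x; have := Df ik.
have : M [eta f with ik |-> x] <= INR k * c.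
  apply: IH; first exact: ltnW.
    by move=> i /=; case: ifP => // _; rewrite Mdist_refl.
  move=> i le_ki /=; case: eqP => // ne_i_ik; apply: f_far.
  rewrite ltn_neqAle le_ki andbT; apply/eqP => eq_ki.
  by apply: ne_i_ik; apply: val_inj; rewrite /= eq_ki.
rewrite S_INR; lra.
Qed.

Lemma Mdist_sym_le x y : Mdist M y x <= INR n.-1 * Mdist M x y.
Proof.
apply: (nMetric_le_mul x); first exact: leq_pred.
  move=> i; rewrite /rep_last /set_last; case: ifP => _; last exact: Rle_refl.
  by rewrite Mdist_refl; exact: Mdist_ge0.
move=> i le_i; rewrite /rep_last /set_last eqn_leq le_i andbT.
by rewrite -ltnS prednK ?ltn_ord.
Qed.

Lemma symmetrized_Mdist_le x y :
  Mdist M x y + Mdist M y x <= INR n * Mdist M x y.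
Proof.
have := Mdist_sym_le x y.
have -> : INR n = INR n.-1 + 1 by rewrite -S_INR prednK.
lra.
Qed.

End NMetricDistance.

Theorem theorem3p14 (X : Type) (n : nat) (M : ('I_n -> X) -> R) :
  (2 <= n)%N -> is_nMetric M ->
  exists d : X -> X -> R, is_metric d /\
    (forall U : X -> Prop, M_open M U <-> d_open d U).
Proof.
move=> n_ge2 M_nMetric; have n_gt0 : (0 < n)%N by exact: leq_trans n_ge2.
set d := fun x y => Mdist M x y + Mdist M y x.
have d_metric : is_metric d.
  apply: symmetrized_is_metric; [exact: Mdist_ge0 | exact: Mdist_eq0 |].
  exact: Mdist_triangle.
have [_ [d_eq0 [_ d_triangle]]] := d_metric.
have Mopen_centered U : d_open (Mdist M) U <-> centered_open (Mdist M) U.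
  apply: d_open_centered; [exact: Mdist_refl | exact: Mdist_triangle].
have dopen_centered U : d_open d U <-> centered_open d U.
  apply: d_open_centered; [by move=> x; apply/d_eq0 | exact: d_triangle].
exists d; split=> // U; change (d_open (Mdist M) U <-> d_open d U).
rewrite Mopen_centered dopen_centered; split.
- apply: (centered_open_dominated _ _ 1); first exact: Rlt_0_1.
  by move=> x y; have := Mdist_ge0 M_nMetric y x; rewrite /d; lra.
- apply: (centered_open_dominated _ _ (INR n)); first exact/lt_0_INR/ltP.
  exact: (symmetrized_Mdist_le M_nMetric n_gt0).
Qed.
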